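(* For every compact set $K\subset\mathbb C^2\setminus C(p)$ there exists $\eta>0$ such that $K\subset f_a(V_-)$ for all $a$ with $0<|a|<\eta$. In particular every point of $\mathbb C^2\setminus C(p)$ lies in $f_a(V_-)$ for all sufficiently small $a\neq0$.
   Context: $p(x)=x^2+c$, $f_a(x,y)=(p(x)-ay,\,x)$, $C(p)=\{(x,y):p(y)=x\}$. Here $\alpha>0$ is fixed and $V_-=\{(x,y):|y|>|x|,\ |y|>\alpha\}$. *)

From Stdlib Require Import Reals List.
Open Scope R_scope.

(* The complex plane Cx = R x R (real part, imaginary part). *)
Definition Cx : Type := (R * R)%type.
Definition Cadd (z w : Cx) : Cx := (fst z + fst w, snd z + snd w).
Definition Csub (z w : Cx) : Cx := (fst z - fst w, snd z - snd w).
Definition Cmul (z w : Cx) : Cx :=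
  (fst z * fst w - snd z * snd w, fst z * snd w + snd z * fst w).
Definition Cmod (z : Cx) : R := sqrt (fst z ^ 2 + snd z ^ 2).

Definition C2 : Type := (Cx * Cx)%type.

Definition dist2 (u v : C2) : R :=
  sqrt (Cmod (Csub (fst u) (fst v)) ^ 2 + Cmod (Csub (snd u) (snd v)) ^ 2).

Definition open2 (U : C2 -> Prop) : Prop :=
  forall u, U u -> exists r, 0 < r /\ forall v, dist2 u v < r -> U v.

Definition compact2 (K : C2 -> Prop) : Prop :=
  forall (I : Type) (U : I -> C2 -> Prop),
    (forall i, open2 (U i)) ->
    (forall z, K z -> exists i, U i z) ->
    exists l : list I, forall z, K z -> exists i, In i l /\ U i z.

Definition p (c x : Cx) : Cx := Cadd (Cmul x x) c.

Definition f (c a : Cx) (z : C2) : C2 :=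
  (Csub (p c (fst z)) (Cmul a (snd z)), fst z).

Definition Cp (c : Cx) (z : C2) : Prop := p c (snd z) = fst z.

Definition Vminus (alpha : R) (z : C2) : Prop :=
  Cmod (snd z) > Cmod (fst z) /\ Cmod (snd z) > alpha.

Definition in_image_fV (c a : Cx) (alpha : R) (z : C2) : Prop :=
  exists w, Vminus alpha w /\ f c a w = z.

(** Off the curve C(p) the defect q(x, y) = p(y) - x does not vanish, and
    f_a(y, q/a) = (x, y); the preimage (y, q/a) lies in V_- as soon as
    |a| (|y| + alpha) < |q|.  The sets {(|y| + alpha) < (n+1) |q|} are open,
    increase with n and exhaust the complement of C(p), so finitely many of
    them, hence one, cover a compact K; then eta = 1/(n+1) works. *)

From Pilot Require Import Defs.
From Stdlib Require Import Reals List Lra Lia.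
Open Scope R_scope.

Lemma norm2_triangle (x1 x2 y1 y2 : R) :
  sqrt ((x1 + y1) ^ 2 + (x2 + y2) ^ 2) <= sqrt (x1 ^ 2 + x2 ^ 2) + sqrt (y1 ^ 2 + y2 ^ 2).
Proof.
  assert (HA := sqrt_sqrt (x1 ^ 2 + x2 ^ 2) ltac:(nra)).
  assert (HB := sqrt_sqrt (y1 ^ 2 + y2 ^ 2) ltac:(nra)).
  assert (HA0 := sqrt_pos (x1 ^ 2 + x2 ^ 2)).
  assert (HB0 := sqrt_pos (y1 ^ 2 + y2 ^ 2)).
  set (A := sqrt (x1 ^ 2 + x2 ^ 2)) in *; set (B := sqrt (y1 ^ 2 + y2 ^ 2)) in *.
  rewrite <- (sqrt_square (A + B)) by lra.
  apply sqrt_le_1_alt.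
  assert (Lagrange : (A * B) ^ 2 = (x1 * y1 + x2 * y2) ^ 2 + (x1 * y2 - x2 * y1) ^ 2).
  { replace ((A * B) ^ 2) with ((A * A) * (B * B)) by ring. rewrite HA, HB. ring. }
  assert (cauchy_schwarz : x1 * y1 + x2 * y2 <= A * B).
  { pose proof (pow2_ge_0 (x1 * y2 - x2 * y1)).
    destruct (Rle_dec (x1 * y1 + x2 * y2) (A * B)) as [|Hgt]; [assumption|].
    assert (0 <= A * B) by (apply Rmult_le_pos; lra). nra. }
  nra.
Qed.

Lemma Cmod_ge0 (z : Cx) : 0 <= Cmod z.
Proof. apply sqrt_pos. Qed.

Lemma Cmod_gt0 (z : Cx) : z <> (0, 0) -> 0 < Cmod z.
Proof.
  destruct z as [x y]; intro Hz; apply sqrt_lt_R0; cbn [fst snd].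
  destruct (Req_dec x 0), (Req_dec y 0); subst; try congruence; nra.
Qed.

Lemma Cmod_mul (z w : Cx) : Cmod (Cmul z w) = Cmod z * Cmod w.
Proof.
  destruct z as [a b], w as [x y]; unfold Cmod, Cmul; cbn [fst snd].
  rewrite <- sqrt_mult by nra. f_equal. ring.
Qed.

Lemma Cmod_add_le (u v : Cx) : Cmod (Cadd u v) <= Cmod u + Cmod v.
Proof. destruct u, v; apply norm2_triangle. Qed.

Lemma Cmod_sub_le (u v : Cx) : Cmod (Csub u v) <= Cmod u + Cmod v.
Proof.
  destruct u as [u1 u2], v as [v1 v2]; unfold Cmod; cbn [fst snd].
  replace (v1 ^ 2 + v2 ^ 2) with ((- v1) ^ 2 + (- v2) ^ 2) by ring.
  apply norm2_triangle.
Qed.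

Lemma Cmod_subC (u v : Cx) : Cmod (Csub u v) = Cmod (Csub v u).
Proof. destruct u, v; unfold Cmod, Csub; cbn [fst snd]; f_equal; ring. Qed.

Lemma Cmod_sub_triangle (u v w : Cx) :
  Cmod (Csub u w) <= Cmod (Csub u v) + Cmod (Csub v w).
Proof.
  destruct u as [u1 u2], v as [v1 v2], w as [w1 w2]; unfold Cmod, Csub; cbn [fst snd].
  replace (u1 - w1) with ((u1 - v1) + (v1 - w1)) by ring.
  replace (u2 - w2) with ((u2 - v2) + (v2 - w2)) by ring.
  apply norm2_triangle.
Qed.

Lemma Cmod_sub_ge (u v : Cx) : Cmod u - Cmod v <= Cmod (Csub u v).
Proof.
  pose proof (Cmod_sub_triangle u v (0, 0)) as H.
  destruct u as [u1 u2], v as [v1 v2]; unfold Cmod, Csub in *; cbn [fst snd] in *.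
  rewrite !Rminus_0_r in H. lra.
Qed.

Lemma Rabs_Cmod_sub_le (u v : Cx) : Rabs (Cmod u - Cmod v) <= Cmod (Csub u v).
Proof.
  apply Rabs_le. pose proof (Cmod_sub_ge u v). pose proof (Cmod_sub_ge v u) as Hvu.
  rewrite Cmod_subC in Hvu. lra.
Qed.

Definition Cinv (a : Cx) : Cx :=
  (fst a / (fst a ^ 2 + snd a ^ 2), - snd a / (fst a ^ 2 + snd a ^ 2)).

Lemma Cmul_CinvK (a w : Cx) : 0 < Cmod a -> Cmul a (Cmul (Cinv a) w) = w.
Proof.
  destruct a as [a1 a2], w as [w1 w2]; unfold Cmod, Cinv, Cmul; cbn [fst snd]; intro Ha.
  assert (Hn : a1 ^ 2 + a2 ^ 2 <> 0) by (intro E; rewrite E, sqrt_0 in Ha; lra).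
  f_equal; field; exact Hn.
Qed.

Lemma dist2_fst (u v : C2) : Cmod (Csub (fst u) (fst v)) <= dist2 u v.
Proof.
  unfold dist2; rewrite <- (sqrt_pow2 (Cmod (Csub (fst u) (fst v)))) at 1 by apply Cmod_ge0.
  apply sqrt_le_1_alt. pose proof (pow2_ge_0 (Cmod (Csub (snd u) (snd v)))). lra.
Qed.

Lemma dist2_snd (u v : C2) : Cmod (Csub (snd u) (snd v)) <= dist2 u v.
Proof.
  unfold dist2; rewrite <- (sqrt_pow2 (Cmod (Csub (snd u) (snd v)))) at 1 by apply Cmod_ge0.
  apply sqrt_le_1_alt. pose proof (pow2_ge_0 (Cmod (Csub (fst u) (fst v)))). lra.
Qed.

Definition continuous2 (F : C2 -> R) : Prop :=
  forall u e, 0 < e ->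
    exists r, 0 < r /\ forall w, dist2 u w < r -> Rabs (F w - F u) < e.

Lemma continuous2_addr (F : C2 -> R) (k : R) :
  continuous2 F -> continuous2 (fun w => F w + k).
Proof.
  intros HF u e He; destruct (HF u e He) as [r [Hr H]].
  exists r; split; [exact Hr|]; intros w Hw.
  replace (F w + k - (F u + k)) with (F w - F u) by ring. auto.
Qed.

Lemma continuous2_scale (F : C2 -> R) (k : R) :
  continuous2 F -> continuous2 (fun w => k * F w).
Proof.
  intros HF u e He; pose proof (Rabs_pos k) as Hk.
  destruct (HF u (e / (Rabs k + 1)) ltac:(apply Rdiv_lt_0_compat; lra)) as [r [Hr H]].
  exists r; split; [exact Hr|]; intros w Hw.
  rewrite <- Rmult_minus_distr_l, Rabs_mult.
  specialize (H w Hw); apply (Rmult_lt_compat_r (Rabs k + 1)) in H; [|lra].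
  unfold Rdiv in H; rewrite Rmult_assoc, Rinv_l in H by lra.
  pose proof (Rabs_pos (F w - F u)). nra.
Qed.

Lemma open2_lt (F G : C2 -> R) :
  continuous2 F -> continuous2 G -> open2 (fun w => F w < G w).
Proof.
  intros HF HG u Hu; set (e := (G u - F u) / 2).
  destruct (HF u e ltac:(unfold e; lra)) as [r1 [Hr1 H1]].
  destruct (HG u e ltac:(unfold e; lra)) as [r2 [Hr2 H2]].
  exists (Rmin r1 r2); split; [now apply Rmin_glb_lt|]; intros w Hw.
  pose proof (Rmin_l r1 r2); pose proof (Rmin_r r1 r2).
  assert (HFw := H1 w ltac:(lra)); assert (HGw := H2 w ltac:(lra)).
  apply Rabs_def2 in HFw, HGw; unfold e in *; lra.
Qed.

Lemma continuous2_Cmod_snd : continuous2 (fun w => Cmod (snd w)).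
Proof.
  intros u e He; exists e; split; [exact He|]; intros w Hw.
  pose proof (Rabs_Cmod_sub_le (snd w) (snd u)) as Hwu; pose proof (dist2_snd u w).
  rewrite Cmod_subC in Hwu. lra.
Qed.

Lemma compact2_increasing_cover (K : C2 -> Prop) (U : nat -> C2 -> Prop) :
  compact2 K -> (forall n, open2 (U n)) ->
  (forall n m z, (n <= m)%nat -> U n z -> U m z) ->
  (forall z, K z -> exists n, U n z) ->
  exists N, forall z, K z -> U N z.
Proof.
  intros HK HU Hmono Hcover.
  destruct (HK nat U HU Hcover) as [l Hl].
  exists (list_max l); intros z Kz.
  destruct (Hl z Kz) as [n [Hn Hz]].
  apply (Hmono n); [|exact Hz].
  exact (proj1 (Forall_forall _ l) (proj1 (list_max_le l _) (le_n _)) n Hn).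
Qed.

Section Henon.

Variables (c : Cx) (alpha : R).
Hypothesis Halpha : 0 <= alpha.

Definition defect (z : C2) : Cx := Csub (p c (snd z)) (fst z).

Lemma defect_neq0 (z : C2) : ~ Cp c z -> defect z <> (0, 0).
Proof.
  destruct z as [[x1 x2] y]; unfold Cp, defect; cbn [fst snd].
  destruct (p c y) as [p1 p2]; unfold Csub; cbn [fst snd].
  intros Hz E; injection E; intros; apply Hz; f_equal; lra.
Qed.

Lemma defect_sub (u w : C2) :
  Csub (defect w) (defect u) =
  Csub (Cmul (Csub (snd w) (snd u)) (Cadd (snd w) (snd u))) (Csub (fst w) (fst u)).
Proof.
  destruct u as [[? ?] [? ?]], w as [[? ?] [? ?]], c.
  unfold defect, p, Csub, Cadd, Cmul; cbn [fst snd]; f_equal; ring.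
Qed.

(* Qualified: the [Reals] import shadows [f] with a field of [family]. *)
Lemma f_preimage (a y : Cx) (z : C2) :
  Cmul a y = defect z -> Defs.f c a (snd z, y) = z.
Proof.
  destruct z as [[x1 x2] z2]; unfold Defs.f, defect; cbn [fst snd]; intros ->.
  destruct (p c z2); unfold Csub; cbn [fst snd]. f_equal; f_equal; ring.
Qed.

Lemma in_image_fV_of_defect (a : Cx) (z : C2) :
  0 < Cmod a -> Cmod a * (Cmod (snd z) + alpha) < Cmod (defect z) ->
  in_image_fV c a alpha z.
Proof.
  intros Ha Hlt.
  set (y := Cmul (Cinv a) (defect z)).
  assert (Hay : Cmul a y = defect z) by (apply Cmul_CinvK; exact Ha).
  assert (Hmod : Cmod a * Cmod y = Cmod (defect z)) by (rewrite <- Cmod_mul, Hay; reflexivity).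
  assert (Hy : Cmod (snd z) + alpha < Cmod y).
  { apply (Rmult_lt_reg_l (Cmod a)); lra. }
  pose proof (Cmod_ge0 (snd z)).
  exists (snd z, y); split.
  - unfold Vminus; cbn [fst snd]; split; lra.
  - now apply f_preimage.
Qed.

Lemma continuous2_Cmod_defect : continuous2 (fun w => Cmod (defect w)).
Proof.
  intros u e He; pose proof (Cmod_ge0 (snd u)).
  set (r := Rmin 1 (e / (2 * Cmod (snd u) + 2))).
  assert (Hr1 : r <= 1) by apply Rmin_l.
  assert (Hre : r * (2 * Cmod (snd u) + 2) <= e).
  { pose proof (Rmin_r 1 (e / (2 * Cmod (snd u) + 2))) as Hr.
    apply (Rmult_le_compat_r (2 * Cmod (snd u) + 2)) in Hr; [|lra].
    unfold Rdiv in Hr; rewrite Rmult_assoc, Rinv_l in Hr by lra. unfold r; lra. }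
  exists r; split.
  { apply Rmin_glb_lt; [lra|]. apply Rdiv_lt_0_compat; lra. }
  intros w Hw; eapply Rle_lt_trans; [apply Rabs_Cmod_sub_le|].
  pose proof (dist2_fst u w) as HX; pose proof (dist2_snd u w) as HY.
  rewrite defect_sub.
  eapply Rle_lt_trans; [apply Cmod_sub_le|]; rewrite Cmod_mul.
  rewrite (Cmod_subC (snd w)), (Cmod_subC (fst w)).
  assert (Hsum : Cmod (Cadd (snd w) (snd u)) <= 2 * Cmod (snd u) + 1).
  { pose proof (Cmod_add_le (snd w) (snd u)).
    pose proof (Cmod_sub_ge (snd w) (snd u)) as Hwu.
    rewrite Cmod_subC in Hwu. lra. }
  pose proof (Cmod_ge0 (Csub (snd u) (snd w))); pose proof (Cmod_ge0 (Cadd (snd w) (snd u))).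
  assert (Cmod (Csub (snd u) (snd w)) * Cmod (Cadd (snd w) (snd u)) <= r * (2 * Cmod (snd u) + 1))
    by (apply Rmult_le_compat; lra).
  lra.
Qed.

Definition defect_dominates (n : nat) (z : C2) : Prop :=
  Cmod (snd z) + alpha < INR (S n) * Cmod (defect z).

Lemma open2_defect_dominates (n : nat) : open2 (defect_dominates n).
Proof.
  apply open2_lt.
  - apply continuous2_addr, continuous2_Cmod_snd.
  - apply continuous2_scale, continuous2_Cmod_defect.
Qed.

Lemma defect_dominates_mono (n m : nat) (z : C2) :
  (n <= m)%nat -> defect_dominates n z -> defect_dominates m z.
Proof.
  unfold defect_dominates; intros Hnm H.
  assert (INR (S n) <= INR (S m)) by (apply le_INR; lia).
  pose proof (Cmod_ge0 (defect z)). nra.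
Qed.

Lemma defect_dominates_exists (z : C2) : ~ Cp c z -> exists n, defect_dominates n z.
Proof.
  intro Hz; pose proof (Cmod_gt0 _ (defect_neq0 z Hz)) as Hq.
  destruct (INR_archimed _ (Cmod (snd z) + alpha) Hq) as [n Hn].
  exists n; unfold defect_dominates.
  assert (INR n <= INR (S n)) by (apply le_INR; lia). nra.
Qed.

Lemma in_image_fV_of_dominates (n : nat) (a : Cx) (z : C2) :
  defect_dominates n z -> 0 < Cmod a -> Cmod a < / INR (S n) ->
  in_image_fV c a alpha z.
Proof.
  unfold defect_dominates; intros Hdom Ha Han.
  apply in_image_fV_of_defect; [exact Ha|].
  assert (HSn : 0 < INR (S n)) by (apply lt_0_INR; lia).
  assert (Han1 : Cmod a * INR (S n) < 1).
  { apply (Rmult_lt_compat_r (INR (S n))) in Han; [|exact HSn].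
    rewrite Rinv_l in Han by lra. exact Han. }
  pose proof (Cmod_ge0 (snd z)); pose proof (Cmod_ge0 (defect z)).
  assert (0 < Cmod (defect z)) by nra.
  nra.
Qed.

End Henon.

Theorem lemma4p9 (c : Cx) (alpha : R) (Halpha : 0 < alpha) :
  (forall K : C2 -> Prop,
      compact2 K ->
      (forall z, K z -> ~ Cp c z) ->
      exists eta, 0 < eta /\
        forall a : Cx, 0 < Cmod a -> Cmod a < eta ->
          forall z, K z -> in_image_fV c a alpha z)
  /\
  (forall z : C2, ~ Cp c z ->
      exists eta, 0 < eta /\
        forall a : Cx, 0 < Cmod a -> Cmod a < eta -> in_image_fV c a alpha z).
Proof.
  assert (Hal : 0 <= alpha) by lra.
  assert (Heta : forall n, 0 < / INR (S n)) by (intro; apply Rinv_0_lt_compat, lt_0_INR; lia).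
  split.
  - intros K HK HKC.
    destruct (compact2_increasing_cover K (defect_dominates c alpha) HK
                (open2_defect_dominates c alpha)
                (defect_dominates_mono c alpha)
                (fun z Kz => defect_dominates_exists c alpha z (HKC z Kz))) as [N HN].
    exists (/ INR (S N)); split; [apply Heta|].
    intros a Ha HaN z Kz; exact (in_image_fV_of_dominates c alpha Hal N a z (HN z Kz) Ha HaN).
  - intros z Hz; destruct (defect_dominates_exists c alpha z Hz) as [n Hn].
    exists (/ INR (S n)); split; [apply Heta|].
    intros a Ha Han; exact (in_image_fV_of_dominates c alpha Hal n a z Hn Ha Han).
Qed.
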